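(* In the Simpler Lazy Set algorithm, for every step $(S,e,T)$ (with $S$ normal) and every address $a$: if $a$ is removed at $S$, then $a$ is removed at $T$.
   Context: Simpler Lazy Set algorithm. Fix a countably infinite set $A$ of addresses with distinguished $\mathsf H,\mathsf T$; $\mathrm{Number}=\mathbb N\cup\{-1,\infty\}$. A state $S$: finite set $\mathrm{Active}^S\subseteq A$, $\mathrm{Next}^S:\mathrm{Active}^S\setminus\{\mathsf T\}\to A$, $\mathrm{Val}^S:\mathrm{Active}^S\to\mathrm{Number}$, and for each process $p$: $PC_p\in\{0,1,2,3.1,3.2,3.3,3.4,3.5\}$, $x_p\in\mathbb N$, $\mathrm{curr}_p\in A$, $\mathrm{status}_p\in\{0,1,f\}$. $S$ is normal if $\mathsf H,\mathsf T$ are active with values $-1,\infty$, other active addresses have values in $\mathbb N$, and for active $a\neq\mathsf T$, $\mathrm{Next}(a)$ is active with $\mathrm{Val}(a)<\mathrm{Val}(\mathrm{Next}(a))$. A path is a sequence $a_1,\dots,a_m$ ($m>1$) of active addresses with $\mathrm{Next}(a_i)=a_{i+1}$; the main branch is the path from $\mathsf H$ to $\mathsf T$. An address is removed at $S$ if it is active in $S$ but not on the main branch of $S$. Steps $(S,e,T)$ of process $p$ on a normal state $S$ (each with a status $\chi(e)$, and some with an address $\mathrm{adr}(e)$): (i) invocation: $PC_p^S=0$, $PC_p^T\in\{1,2,3.1\}$, $x_p^T\in\mathbb N$ arbitrary, nothing else changes; (ii) failure: $PC_p^S\in\{1,2\}$, $PC_p^T=0$, $\chi(e)=f$, nothing else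 changes; (iii) $\mathrm{AD}(x)$ with $x=x_p$, $PC_p^S=1$, $PC_p^T=0$: let $\mathfrak p$ be the address on the main branch with $\mathrm{Val}(\mathfrak p)<x\le\mathrm{Val}(\mathrm{Next}(\mathfrak p))$; if $\mathrm{Val}(\mathrm{Next}(\mathfrak p))=x$, nothing else changes, $\chi(e)=1$, $\mathrm{adr}(e)=\mathrm{Next}^S(\mathfrak p)$; otherwise choose $a\notin\mathrm{Active}^S$, set $\mathrm{Active}^T=\mathrm{Active}^S\cup\{a\}$, $\mathrm{Val}^T(a)=x$, $\mathrm{Next}^T(\mathfrak p)=a$, $\mathrm{Next}^T(a)=\mathrm{Next}^S(\mathfrak p)$, $\chi(e)=0$, $\mathrm{adr}(e)=a$ ($e$ activates $a$); (iv) $\mathrm{RM}(x)$ with $x=x_p$, $PC_p^S=2$, $PC_p^T=0$: if the main branch contains $cu$ with value $x$ and $pred$ is the main-branch address with $\mathrm{Next}^S(pred)=cu$, then $\mathrm{Next}^T(pred)=\mathrm{Next}^S(cu)$, $\chi(e)=1$, $\mathrm{adr}(e)=cu$; otherwise nothing else changes and $\chi(e)=0$; (v) CONTAINS$(x)$ lines with $x=x_p$, each an atomic step changing only $\mathrm{curr}_p,PC_p,\mathrm{status}_p$: 3.1: $\mathrm{curr}:=\mathsf H$; 3.2/3.3: $\mathrm{curr}:=\mathrm{Next}(\mathrm{curr})$ (read in the current state); 3.4: if $\mathrm{Val}(\mathrm{curr})\ge x$ go to 3.5, else back to 3.3; 3.5: return status $1$ if $\mathrm{Val}(\mathrm{curr})=x$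 and $0$ otherwise, $PC_p:=0$. *)

From Stdlib Require Import List.
Import ListNotations.
Set Implicit Arguments.

Inductive Number : Type := NegOne | Fin (n : nat) | Inf.

Definition num_lt (u v : Number) : Prop :=
  match u, v with
  | NegOne, NegOne => False
  | NegOne, _ => True
  | Fin m, Fin n => m < n
  | Fin _, Inf => True
  | _, _ => False
  end.

Definition num_le (u v : Number) : Prop := num_lt u v \/ u = v.

Inductive PCval : Type := PC0 | PC1 | PC2 | PC3_1 | PC3_2 | PC3_3 | PC3_4 | PC3_5.

Inductive Status : Type := St0 | St1 | Stf.

(* A state over address type A and process type P.  The partial maps
   Next (on Active \ {T}) and Val (on Active) are represented by total
   functions whose values outside their domain are irrelevant. *)
Record State (A P : Type) : Type := mkState {
  Active : A -> Prop;
  Next : A -> A;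
  Val : A -> Number;
  PC : P -> PCval;
  xv : P -> nat;
  curr : P -> A;
  status : P -> Status
}.

Definition finite_active (A P : Type) (S : State A P) : Prop :=
  exists l : list A, forall a, Active S a -> In a l.

Definition normal (A P : Type) (aH aT : A) (S : State A P) : Prop :=
  finite_active S /\
  Active S aH /\ Active S aT /\ Val S aH = NegOne /\ Val S aT = Inf /\
  (forall a, Active S a -> a <> aH -> a <> aT -> exists n, Val S a = Fin n) /\
  (forall a, Active S a -> a <> aT ->
     Active S (Next S a) /\ num_lt (Val S a) (Val S (Next S a))).

(* is_path S (a1 :: ... :: am): all ai active, m > 1, Next(ai) = a(i+1)
   (Next is only defined on Active \ {T}, hence ai <> T for i < m). *)
Fixpoint is_path (A P : Type) (aT : A) (S : State A P) (l : list A) : Prop :=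
  match l with
  | [] => False
  | [_] => False
  | a :: ((b :: rest) as tl) =>
      Active S a /\ a <> aT /\ Next S a = b /\
      (match rest with [] => Active S b | _ => is_path aT S tl end)
  end.

Definition on_main (A P : Type) (aH aT : A) (S : State A P) (a : A) : Prop :=
  exists l : list A, is_path aT S l /\ hd_error l = Some aH /\
                     last l aH = aT /\ In a l.

Definition removed (A P : Type) (aH aT : A) (S : State A P) (a : A) : Prop :=
  Active S a /\ ~ on_main aH aT S a.

Definition same_shared (A P : Type) (aT : A) (S T : State A P) : Prop :=
  (forall a, Active T a <-> Active S a) /\
  (forall a, Active S a -> a <> aT -> Next T a = Next S a) /\
  (forall a, Active S a -> Val T a = Val S a).

Definition others_same (A P : Type) (p : P) (S T : State A P) : Prop :=
  forall q, q <> p ->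
    PC T q = PC S q /\ xv T q = xv S q /\ curr T q = curr S q /\
    status T q = status S q.

Definition keeps_x_curr_status (A P : Type) (p : P) (S T : State A P) : Prop :=
  xv T p = xv S p /\ curr T p = curr S p /\ status T p = status S p.

Definition only_PC_changes (A P : Type) (p : P) (S T : State A P) : Prop :=
  others_same p S T /\ keeps_x_curr_status p S T.

(* A step (S,e,T) of process p.  The step status chi(e) and address adr(e)
   are outputs of the step and do not constrain the transition. *)
Inductive step (A P : Type) (aH aT : A) (p : P) (S T : State A P) : Prop :=
  | st_invoke :
      PC S p = PC0 ->
      (PC T p = PC1 \/ PC T p = PC2 \/ PC T p = PC3_1) ->
      same_shared aT S T -> others_same p S T ->
      curr T p = curr S p -> status T p = status S p ->
      step aH aT p S T
  | st_fail :
      (PC S p = PC1 \/ PC S p = PC2) -> PC T p = PC0 ->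
      same_shared aT S T -> only_PC_changes p S T ->
      step aH aT p S T
  | st_add_found (pf : A) :
      PC S p = PC1 -> PC T p = PC0 ->
      on_main aH aT S pf -> pf <> aT ->
      num_lt (Val S pf) (Fin (xv S p)) ->
      num_le (Fin (xv S p)) (Val S (Next S pf)) ->
      Val S (Next S pf) = Fin (xv S p) ->
      same_shared aT S T -> only_PC_changes p S T ->
      step aH aT p S T
  | st_add_new (pf a : A) :
      PC S p = PC1 -> PC T p = PC0 ->
      on_main aH aT S pf -> pf <> aT ->
      num_lt (Val S pf) (Fin (xv S p)) ->
      num_le (Fin (xv S p)) (Val S (Next S pf)) ->
      Val S (Next S pf) <> Fin (xv S p) ->
      ~ Active S a ->
      (forall b, Active T b <-> (Active S b \/ b = a)) ->
      Val T a = Fin (xv S p) ->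
      (forall b, Active S b -> Val T b = Val S b) ->
      Next T pf = a ->
      Next T a = Next S pf ->
      (forall b, Active S b -> b <> aT -> b <> pf -> Next T b = Next S b) ->
      only_PC_changes p S T ->
      step aH aT p S T
  | st_rm_found (cu pred : A) :
      PC S p = PC2 -> PC T p = PC0 ->
      on_main aH aT S cu -> Val S cu = Fin (xv S p) ->
      on_main aH aT S pred -> pred <> aT -> Next S pred = cu ->
      (forall b, Active T b <-> Active S b) ->
      (forall b, Active S b -> Val T b = Val S b) ->
      Next T pred = Next S cu ->
      (forall b, Active S b -> b <> aT -> b <> pred -> Next T b = Next S b) ->
      only_PC_changes p S T ->
      step aH aT p S T
  | st_rm_notfound :
      PC S p = PC2 -> PC T p = PC0 ->
      ~ (exists cu, on_main aH aT S cu /\ Val S cu = Fin (xv S p)) ->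
      same_shared aT S T -> only_PC_changes p S T ->
      step aH aT p S T
  | st_c31 :
      PC S p = PC3_1 -> PC T p = PC3_2 -> curr T p = aH ->
      xv T p = xv S p -> status T p = status S p ->
      same_shared aT S T -> others_same p S T ->
      step aH aT p S T
  | st_c32 :
      PC S p = PC3_2 -> PC T p = PC3_4 ->
      Active S (curr S p) -> curr S p <> aT ->
      curr T p = Next S (curr S p) ->
      xv T p = xv S p -> status T p = status S p ->
      same_shared aT S T -> others_same p S T ->
      step aH aT p S T
  | st_c33 :
      PC S p = PC3_3 -> PC T p = PC3_4 ->
      Active S (curr S p) -> curr S p <> aT ->
      curr T p = Next S (curr S p) ->
      xv T p = xv S p -> status T p = status S p ->
      same_shared aT S T -> others_same p S T ->
      step aH aT p S T
  | st_c34_exit :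
      PC S p = PC3_4 -> Active S (curr S p) ->
      num_le (Fin (xv S p)) (Val S (curr S p)) -> PC T p = PC3_5 ->
      same_shared aT S T -> only_PC_changes p S T ->
      step aH aT p S T
  | st_c34_loop :
      PC S p = PC3_4 -> Active S (curr S p) ->
      ~ num_le (Fin (xv S p)) (Val S (curr S p)) -> PC T p = PC3_3 ->
      same_shared aT S T -> only_PC_changes p S T ->
      step aH aT p S T
  | st_c35 :
      PC S p = PC3_5 -> Active S (curr S p) -> PC T p = PC0 ->
      (Val S (curr S p) = Fin (xv S p) -> status T p = St1) ->
      (Val S (curr S p) <> Fin (xv S p) -> status T p = St0) ->
      xv T p = xv S p -> curr T p = curr S p ->
      same_shared aT S T -> others_same p S T ->
      step aH aT p S T.

Definition countably_infinite (A : Type) : Prop :=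
  exists f : nat -> A, (forall m n, f m = f n -> m = n) /\ (forall a, exists n, f n = a).

(* An address lies on the main branch iff it is reachable from H and reaches T
   along Next.  A step never creates reachability between addresses active in S:
   every edge of T is an edge of S, except that RM replaces pred -> cu by
   pred -> Next(cu), which is the S-path pred -> cu -> Next(cu), and AD replaces
   pf -> Next(pf) by pf -> a -> Next(pf) through a fresh address a.  So a main
   branch of T passing through an old address yields one of S. *)
From Stdlib Require Import List Relations Classical.
Import ListNotations.
Set Implicit Arguments.

Lemma last_cons_default (B : Type) (x y : B) (l : list B) :
  last (y :: l) x = last l y.
Proof.
  revert x y; induction l as [|z l IH]; intros x y; [reflexivity|].
  change (last (z :: l) x = last (z :: l) y).
  now rewrite !IH.
Qed.

Lemma clos_rt_of_subrel (B : Type) (R R' : relation B) :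
  (forall x y, R x y -> clos_refl_trans B R' x y) ->
  inclusion B (clos_refl_trans B R) (clos_refl_trans B R').
Proof.
  intros HR x y Hxy.
  induction Hxy; eauto using rt_refl, rt_trans.
Qed.

Section LazySet.

Variables (A P : Type) (aH aT : A).

Definition edge (S : State A P) (x y : A) : Prop :=
  Active S x /\ x <> aT /\ Next S x = y /\ Active S y.

Definition reach (S : State A P) : A -> A -> Prop := clos_refl_trans A (edge S).

Fixpoint chain (S : State A P) (x : A) (l : list A) : Prop :=
  match l with
  | [] => Active S x
  | y :: l' => Active S x /\ x <> aT /\ Next S x = y /\ chain S y l'
  end.

Lemma chain_head_active (S : State A P) (x : A) (l : list A) :
  chain S x l -> Active S x.
Proof. destruct l; simpl; tauto. Qed.

Lemma is_path_chain (S : State A P) (x : A) (l : list A) :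
  is_path aT S (x :: l) <-> l <> [] /\ chain S x l.
Proof.
  revert x; induction l as [|y l IH]; intro x.
  - simpl; tauto.
  - assert (Htail : match l with [] => Active S y | _ => is_path aT S (y :: l) end
                    <-> chain S y l).
    { destruct l as [|z l]; [reflexivity|].
      rewrite IH; split; [tauto|]. split; [discriminate|assumption]. }
    change (is_path aT S (x :: y :: l)) with
      (Active S x /\ x <> aT /\ Next S x = y /\
       match l with [] => Active S y | _ => is_path aT S (y :: l) end).
    rewrite Htail; simpl; split; [|tauto].
    intro H; split; [discriminate|exact H].
Qed.

Lemma reach_active (S : State A P) (x y : A) :
  reach S x y -> Active S x -> Active S y.
Proof.
  intro Hxy; induction Hxy as [x y Hxy| |]; auto.
  intro; apply Hxy.
Qed.

Lemma chain_In_reach (S : State A P) (x y : A) (l : list A) :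
  chain S x l -> In y (x :: l) -> reach S x y /\ reach S y (last l x).
Proof.
  revert x y; induction l as [|z l IH]; intros x y Hc Hy.
  - destruct Hy as [<-|[]]; split; apply rt_refl.
  - destruct Hc as (Hx & HxT & Hxz & Hc).
    assert (Hedge : reach S x z)
      by (apply rt_step; repeat split; eauto using chain_head_active).
    rewrite last_cons_default.
    destruct Hy as [<-|Hy].
    + split; [apply rt_refl|].
      apply rt_trans with z; [exact Hedge|].
      exact (proj2 (IH z z Hc (or_introl eq_refl))).
    + destruct (IH z y Hc Hy) as [Hzy Hyl].
      split; [apply rt_trans with z|]; assumption.
Qed.

Lemma reach_chain (S : State A P) (x z : A) :
  reach S x z -> Active S z -> exists l, chain S x l /\ last l x = z.
Proof.
  intro Hxz; apply clos_rt_rt1n in Hxz.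
  induction Hxz as [x|x y z (Hx & HxT & Hxy & _) _ IH]; intro Hz.
  - now exists [].
  - destruct (IH Hz) as (l & Hc & Hl).
    exists (y :: l); split; [simpl; tauto|].
    now rewrite last_cons_default.
Qed.

Lemma reach_chain_through (S : State A P) (x y z : A) :
  reach S x y -> reach S y z -> Active S z ->
  exists l, chain S x l /\ last l x = z /\ In y (x :: l).
Proof.
  intros Hxy Hyz Hz; apply clos_rt_rt1n in Hxy.
  induction Hxy as [x|x w y (Hx & HxT & Hxw & _) _ IH].
  - destruct (reach_chain Hyz Hz) as (l & Hc & Hl).
    exists l; simpl; tauto.
  - destruct (IH Hyz) as (l & Hc & Hl & Hy).
    exists (w :: l); split; [simpl; tauto|split].
    + now rewrite last_cons_default.
    + now right.
Qed.

Lemma on_main_reach (S : State A P) (a : A) :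
  on_main aH aT S a -> reach S aH a /\ reach S a aT.
Proof.
  intros (l & Hp & Hhd & Hl & Ha).
  destruct l as [|x l]; [discriminate|].
  injection Hhd as ->.
  apply is_path_chain in Hp.
  rewrite last_cons_default in Hl; rewrite <- Hl.
  exact (chain_In_reach _ (proj2 Hp) Ha).
Qed.

Lemma reach_on_main (S : State A P) (a : A) :
  aH <> aT -> Active S aT -> reach S aH a -> reach S a aT -> on_main aH aT S a.
Proof.
  intros HHT HT Ha HaT.
  destruct (reach_chain_through Ha HaT HT) as (l & Hc & Hl & Hin).
  exists (aH :: l); split; [|split; [reflexivity|split; [|exact Hin]]].
  - apply is_path_chain; split; [|exact Hc].
    intros ->; simpl in Hl; congruence.
  - now rewrite last_cons_default.
Qed.

Lemma normal_next_active (S : State A P) (b : A) :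
  normal aH aT S -> Active S b -> b <> aT -> Active S (Next S b).
Proof. intros (_ & _ & _ & _ & _ & _ & HN) Hb HbT; now apply HN. Qed.

Lemma normal_on_main_active (S : State A P) (b : A) :
  normal aH aT S -> on_main aH aT S b -> Active S b.
Proof.
  intros Hn Hb; apply (reach_active (proj1 (on_main_reach Hb))).
  destruct Hn as (_ & HH & _); exact HH.
Qed.

Lemma same_shared_edge (S T : State A P) (x y : A) :
  same_shared aT S T -> edge T x y -> edge S x y.
Proof.
  intros (HA & HN & _) (Hx & HxT & Hxy & Hy).
  apply HA in Hx; apply HA in Hy.
  rewrite HN in Hxy by assumption.
  repeat split; assumption.
Qed.

Lemma unlink_edge_reach (S T : State A P) (cu pred x y : A) :
  Active S cu -> cu <> aT -> Next S pred = cu ->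
  (forall b, Active T b <-> Active S b) -> Next T pred = Next S cu ->
  (forall b, Active S b -> b <> aT -> b <> pred -> Next T b = Next S b) ->
  edge T x y -> reach S x y.
Proof.
  intros Hcu HcuT Hpred HA HNpred HN (Hx & HxT & Hxy & Hy).
  apply HA in Hx; apply HA in Hy.
  destruct (classic (x = pred)) as [->|Hxp].
  - apply rt_trans with cu; apply rt_step; repeat split; congruence.
  - rewrite HN in Hxy by assumption.
    apply rt_step; repeat split; assumption.
Qed.

Section Insertion.

Variables (S T : State A P) (pf a' : A).
Hypothesis Hnormal : normal aH aT S.
Hypothesis Hpf : Active S pf.
Hypothesis HpfT : pf <> aT.
Hypothesis Hfresh : ~ Active S a'.
Hypothesis HActive : forall b, Active T b <-> (Active S b \/ b = a').
Hypothesis HNpf : Next T pf = a'.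
Hypothesis HNa' : Next T a' = Next S pf.
Hypothesis HN : forall b, Active S b -> b <> aT -> b <> pf -> Next T b = Next S b.

Lemma active_old (b : A) : Active T b -> b <> a' -> Active S b.
Proof. intros Hb Hba; apply HActive in Hb; tauto. Qed.

Lemma next_pf_old : Active S (Next S pf) /\ Next S pf <> a'.
Proof.
  assert (H : Active S (Next S pf)) by now apply normal_next_active.
  split; [exact H|]. intros He; rewrite He in H; contradiction.
Qed.

Lemma insert_edge_skip (x y : A) :
  edge T x y -> x <> a' -> y <> a' -> edge S x y.
Proof.
  intros (Hx & HxT & Hxy & Hy) Hxa Hya.
  apply active_old in Hx; [|exact Hxa]. apply active_old in Hy; [|exact Hya].
  assert (Hxpf : x <> pf) by (intros ->; congruence).
  rewrite HN in Hxy by assumption.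
  repeat split; assumption.
Qed.

Lemma insert_edge_into (x : A) : edge T x a' -> x = pf.
Proof.
  intros (Hx & HxT & Hxa & _).
  apply NNPP; intro Hxpf.
  assert (Hxa' : x <> a') by (intros ->; rewrite HNa' in Hxa; exact (proj2 next_pf_old Hxa)).
  apply active_old in Hx; [|exact Hxa'].
  rewrite HN in Hxa by assumption.
  apply Hfresh; rewrite <- Hxa; now apply normal_next_active.
Qed.

Lemma insert_reach_reflect_from (x z : A) :
  reach T x z -> z <> a' ->
  (x <> a' -> reach S x z) /\ (x = a' -> reach S (Next S pf) z).
Proof.
  intro Hxz; apply clos_rt_rt1n in Hxz.
  induction Hxz as [x|x y z Hxy _ IH]; intro Hza.
  - split; [intros _; apply rt_refl|intros ->; contradiction].
  - destruct (IH Hza) as [IHold IHnew]. split.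
    + intro Hxa. destruct (classic (y = a')) as [->|Hya].
      * rewrite (insert_edge_into Hxy).
        apply rt_trans with (Next S pf); [|exact (IHnew eq_refl)].
        apply rt_step; repeat split; auto. exact (proj1 next_pf_old).
      * apply rt_trans with y; [apply rt_step|exact (IHold Hya)].
        exact (insert_edge_skip Hxy Hxa Hya).
    + intros ->. destruct Hxy as (_ & _ & Hy & _).
      rewrite HNa' in Hy; subst y.
      exact (IHold (proj2 next_pf_old)).
Qed.

Lemma insert_reach_reflect (x z : A) :
  Active S x -> Active S z -> reach T x z -> reach S x z.
Proof.
  intros Hx Hz Hxz.
  apply (insert_reach_reflect_from Hxz); intros ->; contradiction.
Qed.

End Insertion.

Lemma step_active (S T : State A P) (p : P) (a : A) :
  step aH aT p S T -> Active S a -> Active T a.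
Proof.
  destruct 1; intro Ha;
    match goal with
    | Hs : same_shared _ _ _ |- _ => now apply Hs
    | HA : forall b, Active T b <-> _ |- _ => apply HA; auto
    end.
Qed.

Lemma step_reach_reflect (S T : State A P) (p : P) (x y : A) :
  normal aH aT S -> step aH aT p S T ->
  Active S x -> Active S y -> reach T x y -> reach S x y.
Proof.
  intros Hn Hst Hx Hy.
  destruct Hst;
    try match goal with
        | Hs : same_shared _ _ _ |- _ =>
            apply clos_rt_of_subrel; intros u v Huv;
            exact (rt_step _ _ _ _ (same_shared_edge Hs Huv))
        end.
  - eapply (insert_reach_reflect (pf := pf)); eauto using normal_on_main_active.
  - assert (HcuT : cu <> aT).
    { intros ->. destruct Hn as (_ & _ & _ & _ & HVT & _). congruence. }
    apply clos_rt_of_subrel; intros u v.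
    apply (unlink_edge_reach S (cu := cu) (pred := pred));
      eauto using normal_on_main_active.
Qed.

End LazySet.

Theorem lemma4p7 (A P : Type) (aH aT : A) (HA : countably_infinite A)
  (HHT : aH <> aT) (S T : State A P) (p : P) (a : A) :
  normal aH aT S -> step aH aT p S T ->
  removed aH aT S a -> removed aH aT T a.
Proof.
  intros Hn Hst [Ha Hoff].
  split; [eapply step_active; eassumption|].
  intro Hon; apply Hoff.
  pose proof Hn as (_ & HH & HT & _).
  destruct (on_main_reach Hon) as [HHa HaT].
  apply reach_on_main; try assumption;
    eapply step_reach_reflect; eassumption.
Qed.
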